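(* Let $\kappa=\dim_{\mathbb R}\mathbb K$. For all $X,Y,Z,T\in\mathfrak h_3\mathbb K$, with $L^\bullet_X:\mathfrak h_3\mathbb K\to\mathfrak h_3\mathbb K$, $L^\bullet_XY=X\bullet Y$ and real traces on $\mathfrak h_3\mathbb K$: $$\mathrm{tr}(L^\bullet_XL^\bullet_Y)=\frac{\kappa+2}{4}\langle X,Y\rangle,$$ $$\mathrm{tr}(L^\bullet_XL^\bullet_YL^\bullet_ZL^\bullet_T)=\frac{\kappa+2}{32}\big(\langle X,Y\rangle\langle Z,T\rangle+\langle X,T\rangle\langle Z,Y\rangle\big)-\frac{\kappa}{8}\langle Y\bullet T,X\bullet Z\rangle.$$
   Context: $\mathbb K\in\{\mathbb R,\mathbb C,\mathbb H,\mathbb O\}$; $\mathfrak h_3\mathbb K$ the $3\times3$ hermitian matrices over $\mathbb K$ with $X\circ Y=\frac12(XY+YX)$, trace $\mathrm{tr}$, $\langle X,Y\rangle=\mathrm{tr}(X\circ Y)$, $X^2=X\circ X$, $X^3=X\circ X^2$. Define $\det X=\frac13\mathrm{tr}X^3-\frac12\mathrm{tr}X^2\,\mathrm{tr}X+\frac16(\mathrm{tr}X)^3$, let $N$ be the unique symmetric trilinear form with $N(X,X,X)=\det X$, and define the (symmetric) Freudenthal product $\bullet$ by $\langle X\bullet Y,Z\rangle=3N(X,Y,Z)$ for all $Z$. *)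

(* The Albert-type algebras h_3 K for K = R, C, H, O, with K
   obtained as the Cayley-Dickson algebra of level k = 0,1,2,3 (dim 2^k). *)
From HB Require Import structures.
From mathcomp Require Import all_boot all_order all_algebra.
From Stdlib Require Import ClassicalEpsilon.
Set Implicit Arguments. Unset Strict Implicit. Unset Printing Implicit Defensive.
Import Order.TTheory GRing.Theory Num.Theory.
Local Open Scope ring_scope.

Section Albert.
Variable R : fieldType.

(* An element of the Cayley-Dickson algebra of level k: coordinates
   x 0, ..., x (2^k - 1) (coordinates beyond are ignored). *)
Definition Kt := nat -> R.

Definition kconj (k : nat) (x : Kt) : Kt :=
  fun i => if i == 0%N then x 0%N else if (i < 2 ^ k)%N then - x i else 0.

Definition klo (h : nat) (x : Kt) : Kt := fun i => if (i < h)%N then x i else 0.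
Definition khi (h : nat) (x : Kt) : Kt := fun i => if (i < h)%N then x (i + h)%N else 0.

(* Cayley-Dickson product (a,b)(c,d) = (ac - d b^*, a^* d + c b). *)
Fixpoint kmul (k : nat) (x y : Kt) : Kt :=
  match k with
  | 0 => fun i => if i == 0%N then x 0%N * y 0%N else 0
  | k'.+1 => fun i =>
      let h := (2 ^ k')%N in
      if (i < h)%N then
        kmul k' (klo h x) (klo h y) i - kmul k' (khi h y) (kconj k' (khi h x)) i
      else if (i < (2 * h)%N)%N then
        kmul k' (kconj k' (klo h x)) (khi h y) (i - h)%N + kmul k' (klo h y) (khi h x) (i - h)%N
      else 0
  end.

Definition M3 := 'I_3 -> 'I_3 -> Kt.
Definition mmul k (A B : M3) : M3 :=
  fun i j t => \sum_(l < 3) kmul k (A i l) (B l j) t.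
Definition jmul k (A B : M3) : M3 :=
  fun i j t => (mmul k A B i j t + mmul k B A i j t) / 2%:R.
Definition mtr (A : M3) : R := \sum_(i < 3) A i i 0%N.

(* h_3 K is represented by real coordinate vectors of dimension 3 + 3*2^k:
   coordinates 0,1,2 are the (real) diagonal entries; coordinates
   3 + p*2^k + t (t < 2^k) are the K-coordinates of the upper off-diagonal
   entry number p, where p = 0,1,2 stands for entries (0,1),(0,2),(1,2).
   The lower entries are the conjugates (hermitian matrices). *)
Definition hdim (k : nat) : nat := (3 + 3 * 2 ^ k)%N.
Definition hK (k : nat) := 'rV[R]_(hdim k).

Definition vget k (v : hK k) (n : nat) : R :=
  match (insub n : option 'I_(hdim k)) with Some j => v 0 j | None => 0 end.

Definition offpos (i j : 'I_3) : nat := ((i : nat) + j).-1.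

Definition toM k (v : hK k) : M3 := fun i j =>
  let off (p : nat) : Kt :=
    fun t => if (t < 2 ^ k)%N then vget v (3 + p * 2 ^ k + t)%N else 0 in
  if i == j then (fun t => if t == 0%N then vget v i else 0)
  else if (i < j)%N then off (offpos i j) else kconj k (off (offpos j i)).

Definition prow (p : nat) : 'I_3 := inord (if p == 2%N then 1%N else 0%N).
Definition pcol (p : nat) : 'I_3 := inord (if p == 0%N then 1%N else 2%N).

Definition fromM k (A : M3) : hK k := \row_(n < hdim k)
  if (n < 3)%N then A (inord n) (inord n) 0%N
  else A (prow ((n - 3) %/ 2 ^ k)%N) (pcol ((n - 3) %/ 2 ^ k)%N) ((n - 3) %% 2 ^ k)%N.

Definition jprod k (X Y : hK k) : hK k := fromM k (jmul k (toM X) (toM Y)).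
Definition htr k (X : hK k) : R := mtr (toM X).
Definition hinner k (X Y : hK k) : R := htr (jprod X Y).

Definition hdet k (X : hK k) : R :=
  let X2 := jprod X X in let X3 := jprod X X2 in
  htr X3 / 3%:R - htr X2 * htr X / 2%:R + htr X ^+ 3 / 6%:R.

(* the unique symmetric trilinear form N with N(X,X,X) = det X (polarization) *)
Definition hN k (X Y Z : hK k) : R :=
  (hdet (X + Y + Z) - hdet (X + Y) - hdet (X + Z) - hdet (Y + Z)
   + hdet X + hdet Y + hdet Z) / 6%:R.

Definition bullet k (X Y : hK k) : hK k :=
  epsilon (inhabits 0) (fun W => forall Z : hK k, hinner W Z = 3%:R * hN X Y Z).

End Albert.

From Stdlib Require Import QArith Qreduction Ring_polynom BinList.
From Stdlib Require Import ClassicalEpsilon FunctionalExtensionality.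
From HB Require Import structures.
From mathcomp Require Import all_boot all_order all_algebra.
From mathcomp.algebra_tactics Require common.
Import Order.TTheory GRing.Theory Num.Theory.
Set Implicit Arguments. Unset Strict Implicit. Unset Printing Implicit Defensive.
Close Scope Q_scope.

(* Proof by certified symbolic computation.

   Once the Freudenthal product (defined through a choice operator)
   is known to be given by the explicit formula
     X • Y = X o Y - 1/2 (tr X) Y - 1/2 (tr Y) X + 1/2 (tr X tr Y - <X,Y>) I,
   both trace identities are polynomial identities in the real coordinates of
   X, Y, Z, T (the traces being computed in the standard basis).  So are the
   two facts identifying X • Y with the formula: <formula(X,Y), Z> = 3 N(X,Y,Z),
   and <W, e_j> = c_j W_j with c_j in {1, 2}, which makes <.,.> nondegenerate.
   For each K = R, C, H, O (k = 0..3) these four identities are decided by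
   computing normal forms of polynomials with rational coefficients. *)

Definition qadd (a b : Q) : Q := Qred (Qplus a b).
Definition qsub (a b : Q) : Q := Qred (Qminus a b).
Definition qmul (a b : Q) : Q := Qred (Qmult a b).
Definition qzero : Q := Qmake 0 1.
Definition qone : Q := Qmake 1 1.

Notation Poly := (Pol Q).
Definition pzero : Poly := Pc qzero.
Definition pone : Poly := Pc qone.
Definition padd (p q : Poly) : Poly := Padd qzero qadd Qeq_bool p q.
Definition psub (p q : Poly) : Poly := Psub qzero qadd qsub Qopp Qeq_bool p q.
Definition pmul (p q : Poly) : Poly := Pmul qzero qone qadd qmul Qeq_bool p q.
Definition popp (p : Poly) : Poly := Popp Qopp p.
Definition pconst (a b : nat) : Poly := Pc (Qmake (Z.of_nat a) (Pos.of_nat b)).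
Definition pvar (n : nat) : Poly := mk_X qzero qone (Pos.of_succ_nat n).
Definition pdiv_nat (p : Poly) (b : nat) : Poly := pmul p (pconst 1 b).

Fixpoint psum (n : nat) (f : nat -> Poly) : Poly :=
  if n is n'.+1 then padd (psum n' f) (f n') else pzero.

(* Tabulation of f on [0, n): extensionally f, but its values are computed
   once when [vm_compute] evaluates the table. *)
Definition memo (n : nat) (f : nat -> Poly) : nat -> Poly :=
  let tab := map f (iota 0 n) in
  fun i => if (i < n)%N then nth pzero tab i else f i.

Lemma memoE n f i : memo n f i = f i.
Proof.
rewrite /memo; case: ifP => // lt_in.
by rewrite (nth_map 0%N) ?size_iota // nth_iota.
Qed.

Definition sK := nat -> Poly.
Definition sM3 := nat -> nat -> sK.
Definition sH := nat -> Poly.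

Definition skconj (k : nat) (x : sK) : sK :=
  fun i => if i == 0%N then x 0%N else if (i < 2 ^ k)%N then popp (x i) else pzero.
Definition sklo (h : nat) (x : sK) : sK := fun i => if (i < h)%N then x i else pzero.
Definition skhi (h : nat) (x : sK) : sK := fun i => if (i < h)%N then x (i + h)%N else pzero.

Fixpoint skmul (k : nat) (x y : sK) : sK :=
  match k with
  | 0 => fun i => if i == 0%N then pmul (x 0%N) (y 0%N) else pzero
  | k'.+1 =>
     let h := (2 ^ k')%N in
     let a := skmul k' (sklo h x) (sklo h y) in
     let b := skmul k' (skhi h y) (skconj k' (skhi h x)) in
     let c := skmul k' (skconj k' (sklo h x)) (skhi h y) in
     let d := skmul k' (sklo h y) (skhi h x) in
     memo (2 * h) (fun i => if (i < h)%N then psub (a i) (b i)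
        else if (i < 2 * h)%N then padd (c (i - h)%N) (d (i - h)%N) else pzero)
  end.

Definition memo3 (A : sM3) : sM3 :=
  let tab := map (fun i => map (A i) (iota 0 3)) (iota 0 3) in
  fun i j => if (i < 3) && (j < 3) then nth (fun _ => pzero) (nth [::] tab i) j
             else A i j.

Lemma memo3E (A : sM3) i j : memo3 A i j = A i j.
Proof.
rewrite /memo3; case: ifP => // /andP [lt_i3 lt_j3].
by rewrite (nth_map 0%N) ?size_iota // nth_iota // (nth_map 0%N) ?size_iota // nth_iota.
Qed.

(* Sums are bracketed exactly as the big operators unfold. *)
Definition smmul (k : nat) (A B : sM3) : sM3 := memo3 (fun i j =>
  let p0 := skmul k (A i 0%N) (B 0%N j) in
  let p1 := skmul k (A i 1%N) (B 1%N j) in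
  let p2 := skmul k (A i 2%N) (B 2%N j) in
  memo (2 ^ k) (fun t => padd (padd (padd pzero (p0 t)) (p1 t)) (p2 t))).
Definition sjmul (k : nat) (A B : sM3) : sM3 :=
  let P := smmul k A B in let Q := smmul k B A in
  memo3 (fun i j => memo (2 ^ k) (fun t => pdiv_nat (padd (P i j t) (Q i j t)) 2)).
Definition smtr (A : sM3) : Poly :=
  padd (padd (padd pzero (A 0%N 0%N 0%N)) (A 1%N 1%N 0%N)) (A 2%N 2%N 0%N).

Definition svget (k : nat) (s : sH) (n : nat) : Poly := if (n < hdim k)%N then s n else pzero.
Definition soff (k : nat) (s : sH) (p : nat) : sK :=
  fun t => if (t < 2 ^ k)%N then svget k s (3 + p * 2 ^ k + t) else pzero.
Definition stoM (k : nat) (s : sH) : sM3 := memo3 (fun i j =>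
  if i == j then (fun t => if t == 0%N then svget k s i else pzero)
  else if (i < j)%N then soff k s (i + j).-1 else skconj k (soff k s (j + i).-1)).

Definition prow_nat (p : nat) : nat := if p == 2%N then 1 else 0.
Definition pcol_nat (p : nat) : nat := if p == 0%N then 1 else 2.
Definition sfromM (k : nat) (A : sM3) : sH := memo (hdim k) (fun n =>
  if (n < 3)%N then A n n 0%N else
  A (prow_nat ((n - 3) %/ 2 ^ k)) (pcol_nat ((n - 3) %/ 2 ^ k)) ((n - 3) %% 2 ^ k)%N).

Definition sjprod (k : nat) (X Y : sH) : sH := sfromM k (sjmul k (stoM k X) (stoM k Y)).
Definition shtr (k : nat) (X : sH) : Poly := smtr (stoM k X).
Definition shinner (k : nat) (X Y : sH) : Poly := shtr k (sjprod k X Y).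

Definition sadd (X Y : sH) : sH := fun n => padd (X n) (Y n).
Definition ssub (X Y : sH) : sH := fun n => psub (X n) (Y n).
Definition sscale (c : Poly) (X : sH) : sH := fun n => pmul c (X n).
Definition sunit : sH := fun n => if (n < 3)%N then pone else pzero.

Definition shdet (k : nat) (X : sH) : Poly :=
  let X2 := sjprod k X X in let X3 := sjprod k X X2 in let t := shtr k X in
  padd (psub (pdiv_nat (shtr k X3) 3) (pdiv_nat (pmul (shtr k X2) t) 2))
       (pdiv_nat (pmul t (pmul t t)) 6).
Definition shN (k : nat) (X Y Z : sH) : Poly :=
  pdiv_nat (padd (padd (padd (psub (psub (psub
    (shdet k (sadd (sadd X Y) Z)) (shdet k (sadd X Y)))
    (shdet k (sadd X Z))) (shdet k (sadd Y Z)))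
    (shdet k X)) (shdet k Y)) (shdet k Z)) 6.

Definition sfreud (k : nat) (X Y : sH) : sH :=
  let tx := shtr k X in let ty := shtr k Y in
  memo (hdim k) (sadd (ssub (ssub (sjprod k X Y)
      (sscale (pdiv_nat tx 2) Y)) (sscale (pdiv_nat ty 2) X))
    (sscale (pdiv_nat (psub (pmul tx ty) (shinner k X Y)) 2) sunit)).

Definition svar (off : nat) : sH := fun n => pvar (off + n).
Definition sbasis (a : nat) : sH := fun n => if n == a then pone else pzero.

(* <e_j, e_j> = 1 on the diagonal coordinates and 2 off the diagonal. *)
Definition basis_weight (j : nat) : nat := if (j < 3)%N then 1 else 2.

Definition polar_check (k : nat) : bool :=
  let n := hdim k in
  Peq Qeq_bool (shinner k (sfreud k (svar 0) (svar n)) (svar (2 * n)))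
               (pmul (pconst 3 1) (shN k (svar 0) (svar n) (svar (2 * n)))).

Definition basis_check (k : nat) : bool :=
  all (fun j => Peq Qeq_bool (shinner k (svar 0) (sbasis j))
                             (pmul (pconst (basis_weight j) 1) (svar 0 j)))
    (iota 0 (hdim k)).

Definition trace2_lhs (k : nat) : Poly :=
  let n := hdim k in
  psum n (fun a => sfreud k (svar 0) (sfreud k (svar n) (sbasis a)) a).
Definition trace2_rhs (k : nat) : Poly :=
  pmul (pconst (2 ^ k + 2) 4) (shinner k (svar 0) (svar (hdim k))).

Definition trace4_lhs (k : nat) : Poly :=
  let n := hdim k in
  psum n (fun a => sfreud k (svar 0) (sfreud k (svar n)
    (sfreud k (svar (2 * n)) (sfreud k (svar (3 * n)) (sbasis a)))) a).
Definition trace4_rhs (k : nat) : Poly :=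
  let n := hdim k in
  let X := svar 0 in let Y := svar n in let Z := svar (2 * n) in let T := svar (3 * n) in
  psub (pmul (pconst (2 ^ k + 2) 32)
          (padd (pmul (shinner k X Y) (shinner k Z T)) (pmul (shinner k X T) (shinner k Z Y))))
       (pmul (pconst (2 ^ k) 8) (shinner k (sfreud k Y T) (sfreud k X Z))).

Definition albert_check (k : nat) : bool :=
  [&& polar_check k, basis_check k,
      Peq Qeq_bool (trace2_lhs k) (trace2_rhs k)
    & Peq Qeq_bool (trace4_lhs k) (trace4_rhs k)].

Local Open Scope ring_scope.

Lemma trace_lin1_mx (R : pzRingType) (n : nat) (f : 'rV[R]_n -> 'rV[R]_n) :
  \tr (lin1_mx f) = \sum_(i < n) f (delta_mx 0 i) 0 i.
Proof. by apply: eq_bigr => i _; rewrite mxE. Qed.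

Section Freudenthal.
Variable R : fieldType.

Definition hunit (k : nat) : hK R k := \row_(j < hdim k) (if (j < 3)%N then 1 else 0).

Definition freud (k : nat) (X Y : hK R k) : hK R k :=
  jprod X Y - (htr X / 2%:R) *: Y - (htr Y / 2%:R) *: X
  + ((htr X * htr Y - hinner X Y) / 2%:R) *: hunit k.

End Freudenthal.

Section Evaluation.
Variable F : realFieldType.

Lemma R_of_Qred (q : Q) : common.R_of_Q (Qred q) = common.R_of_Q q :> F.
Proof. by apply/eqP; rewrite -common.R_of_Q_eq; apply/Qeq_bool_iff/Qred_correct. Qed.

Lemma ring_eq_ext_F : ring_eq_ext +%R *%R -%R (@eq F).
Proof. by split=> x _ <- // y _ <-. Qed.

Definition almost_ring_F := Rth_ARth (Eqsth F) ring_eq_ext_F (common.RR F).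

Lemma Q_morph : ring_morph (0 : F) 1 +%R *%R (fun x y => x - y) -%R eq
  qzero qone qadd qmul qsub Qopp Qeq_bool common.R_of_Q.
Proof.
have [h0 h1 hadd hsub hmul hopp heq] := common.FQ F.
split=> // x y; rewrite /qadd /qsub /qmul R_of_Qred; [exact: hadd | exact: hsub | exact: hmul].
Qed.

Definition peval (l : seq F) (p : Poly) : F := Pphi 0 +%R *%R common.R_of_Q l p.

Variable l : seq F.

Lemma peval_add p q : peval l (padd p q) = peval l p + peval l q.
Proof. exact: (Padd_ok (Eqsth F) ring_eq_ext_F almost_ring_F Q_morph). Qed.
Lemma peval_sub p q : peval l (psub p q) = peval l p - peval l q.
Proof. exact: (Psub_ok (Eqsth F) ring_eq_ext_F almost_ring_F Q_morph). Qed.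
Lemma peval_mul p q : peval l (pmul p q) = peval l p * peval l q.
Proof. exact: (Pmul_ok (Eqsth F) ring_eq_ext_F almost_ring_F Q_morph). Qed.
Lemma peval_opp p : peval l (popp p) = - peval l p.
Proof. exact: (Popp_ok (Eqsth F) ring_eq_ext_F almost_ring_F Q_morph). Qed.
Lemma peval0 : peval l pzero = 0.
Proof. exact: common.R_of_Q0. Qed.
Lemma peval1 : peval l pone = 1.
Proof. exact: common.R_of_Q1. Qed.

Lemma peval_const a b : (0 < b)%N -> peval l (pconst a b) = a%:R / b%:R.
Proof.
move=> b_gt0; rewrite /peval /= /common.R_of_Q /= Nat2Pos.id; last by case: b b_gt0.
by case: a => [|a] //=; rewrite ?mul0r // SuccNat2Pos.id_succ.
Qed.

Lemma peval_div_nat p b : (0 < b)%N -> peval l (pdiv_nat p b) = peval l p / b%:R.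
Proof. by move=> b_gt0; rewrite peval_mul peval_const // mul1r. Qed.

Lemma peval_Peq p q : Peq Qeq_bool p q -> peval l p = peval l q.
Proof. by move=> pq; apply: (Peq_ok (Eqsth F) ring_eq_ext_F Q_morph _ _ pq). Qed.

Lemma peval_sum n f : peval l (psum n f) = \sum_(i < n) peval l (f i).
Proof.
elim: n => [|n IHn]; first by rewrite big_ord0 peval0.
by rewrite big_ord_recr /= peval_add IHn.
Qed.

Lemma BinList_nth_succ (p : positive) (L : list F) :
  BinList.nth 0 (Pos.succ p) L = BinList.nth 0 p (tl L).
Proof. by elim: p L => [p IHp|p IHp|] L //=; rewrite IHp jump_succ /= -!jump_tl. Qed.

Lemma peval_var n : peval l (pvar n) = nth 0 l n.
Proof.
rewrite /peval /pvar -(mkX_ok (Eqsth F) ring_eq_ext_F almost_ring_F Q_morph).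
elim: n l => [|n IHn] L; first by case: L.
rewrite (_ : Pos.of_succ_nat n.+1 = Pos.succ (Pos.of_succ_nat n)) // BinList_nth_succ IHn.
by case: L => [|a L] //=; rewrite !nth_nil.
Qed.

End Evaluation.

Section Soundness.
Variables (F : realFieldType) (l : seq F).

Definition evK (x : sK) : Kt F := fun i => peval l (x i).
Definition evM3 (A : sM3) : M3 F := fun i j => evK (A i j).
(* Locked, so that matching never unfolds it into a row of polynomials. *)
Definition evH (k : nat) (s : sH) : hK F k := locked (\row_(j < hdim k) peval l (s j)).

Lemma evHE k s j : evH k s 0 j = peval l (s j).
Proof. by rewrite /evH -lock mxE. Qed.

Lemma evK_kconj k x : evK (skconj k x) = kconj k (evK x).
Proof.
apply: functional_extensionality => i; rewrite /evK /skconj /kconj.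
by case: (i == 0)%N => //; case: (i < 2 ^ k)%N; rewrite ?peval_opp ?peval0.
Qed.

Lemma evK_klo h x : evK (sklo h x) = klo h (evK x).
Proof.
apply: functional_extensionality => i; rewrite /evK /sklo /klo.
by case: (i < h)%N; rewrite ?peval0.
Qed.

Lemma evK_khi h x : evK (skhi h x) = khi h (evK x).
Proof.
apply: functional_extensionality => i; rewrite /evK /skhi /khi.
by case: (i < h)%N; rewrite ?peval0.
Qed.

Lemma evK_kmul k x y : evK (skmul k x y) = kmul k (evK x) (evK y).
Proof.
elim: k x y => [|k IHk] x y; apply: functional_extensionality => i.
  by rewrite /evK /=; case: (i == 0)%N; rewrite ?peval_mul ?peval0.
have IHi a b j : peval l (skmul k a b j) = kmul k (evK a) (evK b) j by rewrite -IHk.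
rewrite {1}/evK /= memoE; case: ifP => _.
  by rewrite peval_sub !IHi !evK_kconj !evK_khi !evK_klo.
case: ifP => _; last by rewrite peval0.
by rewrite peval_add !IHi !evK_kconj !evK_khi !evK_klo.
Qed.

Lemma evM3_mmul k A B : evM3 (smmul k A B) = mmul k (evM3 A) (evM3 B).
Proof.
do 3![apply: functional_extensionality => ?].
rewrite /evM3 /evK /smmul memo3E memoE !peval_add peval0 /mmul !big_ord_recr big_ord0.
by rewrite /= !add0r -!/(evK _ _) !evK_kmul.
Qed.

Lemma evM3_jmul k A B : evM3 (sjmul k A B) = jmul k (evM3 A) (evM3 B).
Proof.
do 3![apply: functional_extensionality => ?].
by rewrite /jmul -!evM3_mmul /evM3 /evK /sjmul memo3E memoE peval_div_nat // peval_add.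
Qed.

Lemma vget_evH k s n : vget (evH k s) n = peval l (svget k s n).
Proof.
rewrite /vget /svget; case: insubP => [j _ <- | /negbTE ->]; last by rewrite peval0.
by rewrite ltn_ord evHE.
Qed.

Lemma evM3_toM k s : evM3 (stoM k s) = toM (evH k s).
Proof.
apply: functional_extensionality => i; apply: functional_extensionality => j.
rewrite /evM3 /stoM memo3E /toM /= -[(i : nat) == j]/(i == j); case: (i == j).
  apply: functional_extensionality => t; rewrite /evK.
  by case: (t == 0)%N; rewrite ?vget_evH ?peval0.
have evK_off p : evK (soff k s p) =
    fun t => if (t < 2 ^ k)%N then vget (evH k s) (3 + p * 2 ^ k + t) else 0.
  apply: functional_extensionality => t; rewrite /evK /soff.
  by case: ifP; rewrite ?vget_evH ?peval0.
by case: ifP; rewrite ?evK_kconj evK_off.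
Qed.

Lemma evH_fromM k A : evH k (sfromM k A) = fromM k (evM3 A).
Proof.
apply/rowP => n; rewrite evHE mxE /sfromM memoE /evM3 /evK.
case: ifP => [lt_n3 | _]; first by rewrite inordK.
by rewrite /prow /pcol !inordK //; [case: ifP | case: ifP].
Qed.

Lemma evH_jprod k X Y : evH k (sjprod k X Y) = jprod (evH k X) (evH k Y).
Proof. by rewrite /jprod -!evM3_toM -evM3_jmul evH_fromM. Qed.

Lemma htr_evH k X : htr (evH k X) = peval l (shtr k X).
Proof.
rewrite /htr -evM3_toM /mtr !big_ord_recr big_ord0 /shtr /smtr !peval_add peval0.
by rewrite /= add0r.
Qed.

Lemma hinner_evH k X Y : hinner (evH k X) (evH k Y) = peval l (shinner k X Y).
Proof. by rewrite /hinner -evH_jprod htr_evH. Qed.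

Lemma evH_add k X Y : evH k (sadd X Y) = evH k X + evH k Y.
Proof. by apply/rowP => n; rewrite !mxE !evHE peval_add. Qed.

Lemma evH_sub k X Y : evH k (ssub X Y) = evH k X - evH k Y.
Proof. by apply/rowP => n; rewrite !mxE !evHE peval_sub. Qed.

Lemma evH_scale k c X : evH k (sscale c X) = peval l c *: evH k X.
Proof. by apply/rowP => n; rewrite !mxE !evHE peval_mul. Qed.

Lemma evH_unit k : evH k sunit = hunit F k.
Proof. by apply/rowP => n; rewrite evHE mxE /sunit; case: ifP; rewrite ?peval1 ?peval0. Qed.

(* The final steps below go through [congr] rather than [rewrite]: matching
   two different symbolic terms against each other is very expensive. *)
Lemma hdet_evH k X : hdet (evH k X) = peval l (shdet k X).
Proof.
rewrite /hdet -(evH_jprod k X X) -(evH_jprod k X (sjprod k X X)).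
rewrite /shdet peval_add peval_sub !peval_div_nat // !peval_mul exprS expr2.
by congr (_ / _ - _ * _ / _ + _ * (_ * _) / _); apply: htr_evH.
Qed.

Lemma hN_evH k X Y Z : hN (evH k X) (evH k Y) (evH k Z) = peval l (shN k X Y Z).
Proof.
rewrite /hN -!evH_add /shN peval_div_nat // 3!peval_add 3!peval_sub.
by congr ((_ - _ - _ - _ + _ + _ + _) / _); apply: hdet_evH.
Qed.

Lemma evH_freud k X Y : evH k (sfreud k X Y) = freud (evH k X) (evH k Y).
Proof.
apply/rowP => n; rewrite evHE /sfreud memoE /sadd /ssub /sscale.
rewrite peval_add 2!peval_sub 3!peval_mul !peval_div_nat // peval_sub peval_mul.
rewrite /freud -(evH_jprod k X Y) -(evH_unit k) !mxE !evHE.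
by congr (_ - _ * _ - _ * _ + (_ - _) / _ * _); rewrite ?htr_evH ?hinner_evH.
Qed.

Lemma evH_basis k (a : 'I_(hdim k)) : evH k (sbasis a) = delta_mx 0 a.
Proof.
apply/rowP => j; rewrite evHE mxE /sbasis eqxx /=.
by rewrite -[(j : nat) == a]/(j == a); case: (j == a); rewrite ?peval1 ?peval0.
Qed.

End Soundness.

Section Identities.
Variable F : realFieldType.

Lemma vget_ord k (X : hK F k) (j : 'I_(hdim k)) : vget X j = X 0 j.
Proof.
by rewrite /vget; case: insubP => [j' _ /val_inj -> // | ]; rewrite ltn_ord.
Qed.

Definition coords k (X : hK F k) : seq F := mkseq (vget X) (hdim k).
Definition valuation k (Xs : seq (hK F k)) : seq F := flatten [seq coords X | X <- Xs].

Lemma evH_svar k (Xs : seq (hK F k)) i : (i < size Xs)%N ->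
  evH (valuation Xs) k (svar (i * hdim k)) = nth 0 Xs i.
Proof.
move=> lt_i; apply/rowP => j; rewrite evHE peval_var.
elim: Xs i lt_i => [|X Xs IHXs] [|i] // lt_i;
  rewrite (_ : valuation (X :: Xs) = coords X ++ valuation Xs) // nth_cat size_mkseq.
  by rewrite mul0n add0n ltn_ord nth_mkseq // vget_ord.
by rewrite mulSn -addnA ltnNge leq_addr /= addKn IHXs.
Qed.

Section Certified.
Variable k : nat.
Hypothesis check : albert_check k.

Lemma hinner_basis (W : hK F k) (j : 'I_(hdim k)) :
  hinner W (delta_mx 0 j) = (basis_weight j)%:R * W 0 j.
Proof.
have /and4P [_ /allP basis _ _] := check.
have := basis j; rewrite mem_iota ltn_ord => /(_ isT) /(peval_Peq (valuation [:: W])).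
have eW : evH (valuation [:: W]) k (svar 0) = W := @evH_svar k [:: W] 0 isT.
rewrite -hinner_evH evH_basis eW => ->.
by rewrite peval_mul peval_const // divr1 -[in RHS]eW evHE.
Qed.

Lemma hinner_separates (W W' : hK F k) : (forall Z, hinner W Z = hinner W' Z) -> W = W'.
Proof.
move=> eqWW'; apply/rowP => j.
have weight_neq0 : (basis_weight j)%:R != 0 :> F by rewrite pnatr_eq0 /basis_weight; case: ifP.
by apply: (mulfI weight_neq0); rewrite -!hinner_basis.
Qed.

Lemma freud_polar (X Y Z : hK F k) : hinner (freud X Y) Z = 3%:R * hN X Y Z.
Proof.
have /and4P [polar _ _ _] := check.
pose l := valuation [:: X; Y; Z].
have eX : evH l k (svar 0) = X by exact: (evH_svar _ (i := 0)).
have eY : evH l k (svar (hdim k)) = Y by rewrite -[hdim k]mul1n; exact: evH_svar.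
have eZ : evH l k (svar (2 * hdim k)) = Z by exact: evH_svar.
rewrite -eX -eY -eZ -evH_freud hinner_evH hN_evH (peval_Peq l polar).
by rewrite peval_mul peval_const // divr1.
Qed.

Lemma bullet_freud (X Y : hK F k) : bullet X Y = freud X Y.
Proof.
have bullet_spec : forall Z, hinner (bullet X Y) Z = 3%:R * hN X Y Z.
  apply: (epsilon_spec (inhabits 0) (fun W => forall Z, hinner W Z = 3%:R * hN X Y Z)).
  by exists (freud X Y); exact: freud_polar.
by apply: hinner_separates => Z; rewrite bullet_spec freud_polar.
Qed.

Lemma trace_LL (X Y : hK F k) :
  \tr (lin1_mx (freud X \o freud Y)) = (2 ^ k + 2)%:R / 4%:R * hinner X Y.
Proof.
have /and4P [_ _ trace2 _] := check.
pose l := valuation [:: X; Y].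
have eX : evH l k (svar 0) = X by exact: (evH_svar _ (i := 0)).
have eY : evH l k (svar (hdim k)) = Y by rewrite -[hdim k]mul1n; exact: evH_svar.
transitivity (peval l (trace2_lhs k)).
  rewrite trace_lin1_mx peval_sum; apply: eq_bigr => i _.
  by rewrite -(@evHE F l k) !evH_freud evH_basis eX eY.
rewrite (peval_Peq l trace2) /trace2_rhs peval_mul peval_const //.
by rewrite -(hinner_evH l) eX eY.
Qed.

Lemma trace_LLLL (X Y Z T : hK F k) :
  \tr (lin1_mx (freud X \o freud Y \o freud Z \o freud T))
    = (2 ^ k + 2)%:R / 32%:R * (hinner X Y * hinner Z T + hinner X T * hinner Z Y)
      - (2 ^ k)%:R / 8%:R * hinner (freud Y T) (freud X Z).
Proof.
have /and4P [_ _ _ trace4] := check.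
pose l := valuation [:: X; Y; Z; T].
have eX : evH l k (svar 0) = X by exact: (evH_svar _ (i := 0)).
have eY : evH l k (svar (hdim k)) = Y by rewrite -[hdim k]mul1n; exact: evH_svar.
have eZ : evH l k (svar (2 * hdim k)) = Z by exact: evH_svar.
have eT : evH l k (svar (3 * hdim k)) = T by exact: evH_svar.
transitivity (peval l (trace4_lhs k)).
  rewrite trace_lin1_mx peval_sum; apply: eq_bigr => i _.
  by rewrite -(@evHE F l k) !evH_freud evH_basis eX eY eZ eT.
have peval_rhs (c1 c2 a b c d e : Poly) :
    peval l (psub (pmul c1 (padd (pmul a b) (pmul c d))) (pmul c2 e))
    = peval l c1 * (peval l a * peval l b + peval l c * peval l d) - peval l c2 * peval l e.
  by rewrite peval_sub !peval_mul peval_add !peval_mul.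
rewrite (peval_Peq l trace4) /trace4_rhs peval_rhs !peval_const //.
congr (_ * (_ * _ + _ * _) - _ * _).
- by rewrite -(hinner_evH l) eX eY.
- by rewrite -(hinner_evH l) eZ eT.
- by rewrite -(hinner_evH l) eX eT.
- by rewrite -(hinner_evH l) eZ eY.
- rewrite -(hinner_evH l); apply: congr2.
  + by rewrite evH_freud eY eT.
  + by rewrite evH_freud eX eZ.
Qed.

End Certified.
End Identities.

Lemma albert_check_le3 (k : nat) : (k <= 3)%N -> albert_check k.
Proof.
case: k => [|[|[|[|k]]]] hk; last by [].
all: vm_cast_no_check (erefl true).
Qed.

Theorem mainTheorem6 (R : realFieldType) (k : nat) (hk : (k <= 3)%N)
    (X Y Z T : hK R k) :
  \tr (lin1_mx (bullet X \o bullet Y))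
    = (2 ^ k + 2)%:R / 4%:R * hinner X Y /\
  \tr (lin1_mx (bullet X \o bullet Y \o bullet Z \o bullet T))
    = (2 ^ k + 2)%:R / 32%:R * (hinner X Y * hinner Z T + hinner X T * hinner Z Y)
      - (2 ^ k)%:R / 8%:R * hinner (bullet Y T) (bullet X Z).
Proof.
have check := albert_check_le3 hk.
have -> : @bullet R k = @freud R k.
  apply: functional_extensionality => A; apply: functional_extensionality => B.
  exact: bullet_freud.
split; [exact: trace_LL check X Y | exact: trace_LLLL check X Y Z T].
Qed.
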